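(* Let $d\ge 5$ and let $\mathcal A_1,\dots,\mathcal A_d\subset 2^{[n]}$ be pairwise cross-IU families (for all $i\ne j$ and all $A\in\mathcal A_i$, $B\in\mathcal A_j$: $A\cap B\neq\emptyset$ and $A\cup B\neq[n]$) with $|\mathcal A_1|\ge|\mathcal A_2|\ge\dots\ge|\mathcal A_d|$. Then $$|\mathcal A_1|+\dots+|\mathcal A_d|\le d\,2^{n-2}.$$ Moreover, the inequality is strict unless $\mathcal A_1=\dots=\mathcal A_d$.
   Context: $[n]=\{1,\dots,n\}$ and $2^{[n]}$ is its power set. *)

From mathcomp Require Import all_boot.
Set Implicit Arguments. Unset Strict Implicit. Unset Printing Implicit Defensive.

Definition cross_IU (n : nat) (F G : {set {set 'I_n}}) : Prop :=
  forall A B, A \in F -> B \in G -> A :&: B != set0 /\ A :|: B != setT.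

Definition pairwise_cross_IU (n d : nat) (F : 'I_d -> {set {set 'I_n}}) : Prop :=
  forall i j : 'I_d, i != j -> cross_IU (F i) (F j).

From mathcomp Require Import all_boot zify ring.
Set Implicit Arguments. Unset Strict Implicit. Unset Printing Implicit Defensive.

(* Harris-Kleitman: an up-closed and a down-closed family of subsets of [n]
   are positively correlated.  If A and B are cross-IU, then B lies in U :&: D,
   where U and D are the up- and down-closures of B, while A lies in the duals
   {S | ~: S \notin U} and {S | ~: S \notin D}, which are again up- resp.
   down-closed and have sizes 2^n - |U| and 2^n - |D|.  Correlation and AM-GM
   give 16 |A| |B| <= 4^n; complementation alone gives |A| + |B| <= 2^n.
   If 4 |A_1| <= 2^n the bound is immediate, and equality forces every family
   to have 2^(n-2) members; two such families cross-IU with a common third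
   one coincide, because their union is still cross-IU with it and so has at
   most 2^(n-2) members.  If 4 |A_1| > 2^n, the two bounds for the pair
   A_1, A_2 give 4 |A_1| + 16 |A_2| < 5 2^n, and A_3, ..., A_d are no larger
   than A_2. *)

Lemma chebyshev_sum2 u0 u1 v0 v1 :
  u0 <= u1 -> v1 <= v0 -> 2 * (u0 * v0 + u1 * v1) <= (u0 + u1) * (v0 + v1).
Proof. nia. Qed.

Section UpDownFamilies.
Variable T : finType.

Definition up_closed (X : {set {set T}}) :=
  forall A B : {set T}, A \subset B -> A \in X -> B \in X.

Definition down_closed (X : {set {set T}}) :=
  forall A B : {set T}, A \subset B -> B \in X -> A \in X.

Lemma big_subsetD1 (f : {set T} -> nat) (K : {set T}) x : x \in K ->
  \sum_(S : {set T} | S \subset K) f S =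
  \sum_(S : {set T} | S \subset K :\ x) f S +
  \sum_(S : {set T} | S \subset K :\ x) f (x |: S).
Proof.
move=> xK; rewrite (bigID (fun S : {set T} => x \in S)) /= addnC; congr (_ + _).
  by apply: eq_bigl => S; rewrite subsetD1.
rewrite (reindex_onto (fun S : {set T} => x |: S) (fun S => S :\ x)) /=; last first.
  by move=> S /andP[_ xS]; rewrite setD1K.
apply: eq_bigl => S; rewrite setU11 andbT subUset sub1set xK /=.
rewrite subsetD1; have [xS|xS] := boolP (x \in S); last by rewrite setU1K ?eqxx.
by rewrite andbF; apply/negbTE/nandP; right; apply: contraTneq xS => <-; rewrite setD11.
Qed.

Lemma harris_sum (K : {set T}) (u v : {set T} -> nat) :
  {homo u : A B / A \subset B >-> A <= B} ->
  {homo v : A B / A \subset B >-> B <= A} ->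
  2 ^ #|K| * \sum_(S : {set T} | S \subset K) u S * v S <=
  (\sum_(S : {set T} | S \subset K) u S) * (\sum_(S : {set T} | S \subset K) v S).
Proof.
move Hk : #|K| => k; elim: k K Hk u v => [|k IH] K hK u v hu hv.
  have -> : K = set0 by apply/eqP; rewrite -cards_eq0 hK.
  have sub0 : (fun S : {set T} => S \subset set0) =1 pred1 set0.
    by move=> S; rewrite subset0.
  by rewrite !(big_pred1 _ sub0) mul1n.
have [x xK] : exists x, x \in K by apply/set0Pn; rewrite -cards_eq0 hK.
have hKx : #|K :\ x| = k by move: hK; rewrite (cardsD1 x) xK => -[].
have hux : {homo (fun A => u (x |: A)) : A B / A \subset B >-> A <= B}.
  by move=> A B sAB; apply: hu; rewrite setUS.
have hvx : {homo (fun A => v (x |: A)) : A B / A \subset B >-> B <= A}.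
  by move=> A B sAB; apply: hv; rewrite setUS.
(* On the half of the cube containing [x], [u] is larger and [v] smaller, so
   Chebyshev's sum inequality combines the two instances of IH. *)
have IH0 := IH _ hKx _ _ hu hv; have IH1 := IH _ hKx _ _ hux hvx.
rewrite /= in IH1; rewrite expnS -mulnA !(big_subsetD1 _ xK) mulnDr.
apply: leq_trans (chebyshev_sum2 _ _).
  by rewrite leq_mul2l (leq_add IH0 IH1) orbT.
  by apply: leq_sum => S _; apply/hu/subsetUr.
by apply: leq_sum => S _; apply/hv/subsetUr.
Qed.

Lemma sum_subsetT_mem (X : {set {set T}}) :
  \sum_(S : {set T} | S \subset setT) (S \in X : nat) = #|X|.
Proof.
rewrite -sum1_card [RHS]big_mkcond; apply: eq_big => [S|S _]; first by rewrite subsetT.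
by case: (S \in X).
Qed.

Lemma harris_kleitman (U D : {set {set T}}) :
  up_closed U -> down_closed D -> 2 ^ #|T| * #|U :&: D| <= #|U| * #|D|.
Proof.
move=> hU hD; rewrite -cardsT -!sum_subsetT_mem.
under eq_bigr => S _ do rewrite inE -mulnb.
apply: harris_sum => A B sAB.
  by case AU: (A \in U); rewrite // (hU _ _ sAB AU).
by case BD: (B \in D); rewrite ?(hD _ _ sAB BD) // leq_b1.
Qed.

Definition dual (X : {set {set T}}) := [set S : {set T} | ~: S \notin X].

Definition upper_closure (B : {set {set T}}) :=
  [set S : {set T} | [exists R in B, R \subset S]].

Definition lower_closure (B : {set {set T}}) :=
  [set S : {set T} | [exists R in B, S \subset R]].

Lemma card_dual (X : {set {set T}}) : #|dual X| + #|X| = 2 ^ #|T|.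
Proof.
have -> : dual X = ~: ((@setC T) @^-1: X) by apply/setP => S; rewrite !inE.
rewrite addnC -{1}(card_preimset X (@setC_inj T)) cardsC.
by rewrite -[LHS]cardsT -powersetT card_powerset cardsT.
Qed.

Lemma dual_up_closed (X : {set {set T}}) : up_closed X -> up_closed (dual X).
Proof.
move=> hX A B sAB; rewrite !inE; apply: contra; apply: hX.
by rewrite setCS.
Qed.

Lemma dual_down_closed (X : {set {set T}}) : down_closed X -> down_closed (dual X).
Proof.
move=> hX A B sAB; rewrite !inE; apply: contra; apply: hX.
by rewrite setCS.
Qed.

Lemma upper_closure_up_closed (B : {set {set T}}) : up_closed (upper_closure B).
Proof.
move=> X Y sXY; rewrite !inE => /exists_inP[R RB sRX].
by apply/exists_inP; exists R; rewrite // (subset_trans sRX sXY).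
Qed.

Lemma lower_closure_down_closed (B : {set {set T}}) : down_closed (lower_closure B).
Proof.
move=> X Y sXY; rewrite !inE => /exists_inP[R RB sYR].
by apply/exists_inP; exists R; rewrite // (subset_trans sXY sYR).
Qed.

Lemma sub_closures (B : {set {set T}}) : B \subset upper_closure B :&: lower_closure B.
Proof.
by apply/subsetP => S SB; rewrite !inE; apply/andP; split; apply/exists_inP; exists S.
Qed.

Lemma harris_kleitman_sub (U D Y : {set {set T}}) :
  up_closed U -> down_closed D -> Y \subset U :&: D ->
  2 ^ #|T| * #|Y| <= #|U| * #|D|.
Proof.
move=> hU hD /subset_leq_card sY.
by apply: leq_trans (harris_kleitman hU hD); rewrite leq_mul2l sY orbT.
Qed.

Lemma card_mul_dual (X : {set {set T}}) :
  4 * (#|X| * #|dual X|) <= 2 ^ #|T| * 2 ^ #|T|.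
Proof. by rewrite mulnn -(card_dual X) addnC; case: (nat_AGM2 #|X| #|dual X|). Qed.

Lemma card_mul_sub_dual_closures (A B : {set {set T}}) :
  A \subset dual (upper_closure B) :&: dual (lower_closure B) ->
  16 * (#|A| * #|B|) <= 2 ^ #|T| * 2 ^ #|T|.
Proof.
move=> sA; have upP := @upper_closure_up_closed B.
have downQ := @lower_closure_down_closed B.
have hB := harris_kleitman_sub upP downQ (@sub_closures B).
have hA := harris_kleitman_sub (dual_up_closed upP) (dual_down_closed downQ) sA.
have hPQ :=
  leq_mul (@card_mul_dual (upper_closure B)) (@card_mul_dual (lower_closure B)).
move: hA hB hPQ; set M := 2 ^ #|T|; set P := upper_closure B; set Q := lower_closure B.
move=> hA hB hPQ; have M_gt0 : 0 < M * M by rewrite muln_gt0 expn_gt0.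
rewrite -(leq_pmul2l M_gt0); apply: leq_trans hPQ.
have -> : M * M * (16 * (#|A| * #|B|)) = 16 * ((M * #|A|) * (M * #|B|)) by ring.
have -> : 4 * (#|P| * #|dual P|) * (4 * (#|Q| * #|dual Q|)) =
          16 * ((#|dual P| * #|dual Q|) * (#|P| * #|Q|)) by ring.
by rewrite leq_mul2l leq_mul ?orbT.
Qed.

End UpDownFamilies.

Section CrossIU.
Variable n : nat.
Implicit Types A B X Y Z : {set {set 'I_n}}.

Lemma cross_IU_setU X Y Z : cross_IU X Y -> cross_IU X Z -> cross_IU X (Y :|: Z).
Proof. by move=> hY hZ S R SX; rewrite inE => /orP[]; [apply: hY | apply: hZ]. Qed.

Lemma cross_IU_sub_dual A B : cross_IU A B -> B \subset dual A.
Proof.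
move=> hAB; apply/subsetP => S SB; rewrite inE; apply/negP => SA.
by have [] := hAB _ _ SA SB; rewrite setIC setICr eqxx.
Qed.

Lemma cross_IU_sub_dual_closures A B : cross_IU A B ->
  A \subset dual (upper_closure B) :&: dual (lower_closure B).
Proof.
move=> hAB; apply/subsetP => S SA; rewrite !inE.
apply/andP; split; apply/exists_inP => -[R RB sSR]; have [SRn0 SRnT] := hAB _ _ SA RB.
  by move: SRn0; rewrite setI_eq0 disjoint_sym disjoints_subset sSR.
by move: SRnT; rewrite eqEsubset subsetT -{1}(setUCr S) setUS.
Qed.

Lemma cross_IU_card_add A B : cross_IU A B -> #|A| + #|B| <= 2 ^ n.
Proof.
move=> /cross_IU_sub_dual /subset_leq_card sB.
by have := card_dual A; rewrite card_ord => <-; rewrite addnC leq_add2r.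
Qed.

Lemma cross_IU_card_mul A B : cross_IU A B -> 16 * (#|A| * #|B|) <= 2 ^ n * 2 ^ n.
Proof.
by move=> /cross_IU_sub_dual_closures /card_mul_sub_dual_closures; rewrite card_ord.
Qed.

Lemma cross_IU_quarter_uniq X Y Z :
  4 * #|X| = 2 ^ n -> 4 * #|Y| = 2 ^ n -> 4 * #|Z| = 2 ^ n ->
  cross_IU X Y -> cross_IU X Z -> Y = Z.
Proof.
move=> hX hY hZ XY XZ.
have := cross_IU_card_mul (cross_IU_setU XY XZ).
have -> : 16 * (#|X| * #|Y :|: Z|) = 2 ^ n * (4 * #|Y :|: Z|) by rewrite -hX; ring.
rewrite leq_pmul2l ?expn_gt0 // -{1}hY leq_pmul2l // => cardYZ.
have sZY : Z \subset Y.
  have /eqP -> : Y == Y :|: Z by rewrite eqEcard subsetUl cardYZ.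
  exact: subsetUr.
by apply/eqP; rewrite eq_sym eqEcard sZY /= -(leq_pmul2l (_ : 0 < 4)) // hY hZ.
Qed.

End CrossIU.

Lemma exists_ord_neq2 d (i j : 'I_d) : 2 < d -> exists k : 'I_d, (k != i) && (k != j).
Proof.
move=> d2; have : [set i; j] \proper [set: 'I_d].
  rewrite properEcard subsetT cardsT card_ord cards2; apply: leq_trans d2.
  by case: (i != j).
by case/properP => _ [k _]; rewrite !inE negb_or; exists k.
Qed.

Lemma pairwise_cross_IU_quarter_eq n d (F : 'I_d -> {set {set 'I_n}}) :
  2 < d -> pairwise_cross_IU F -> (forall i, 4 * #|F i| = 2 ^ n) ->
  forall i j, F i = F j.
Proof.
move=> d2 hF quarter i j; have [k /andP[ki kj]] := exists_ord_neq2 i j d2.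
exact: cross_IU_quarter_uniq (quarter k) (quarter i) (quarter j) (hF _ _ ki) (hF _ _ kj).
Qed.

Lemma dominant_term_bound a t M d :
  5 <= d -> M < 4 * a -> a + t <= M -> 16 * (a * t) <= M * M ->
  4 * (a + d.-1 * t) < d * M.
Proof.
move=> d5 Ma aM atM.
have tM : 4 * t < M by nia.
(* With x = 4a/M in (1, 4] and 4t/M <= 1/x, this is x + 4/x < 5. *)
have five : 4 * a + 16 * t < 5 * M by nia.
nia.
Qed.

Lemma quarter_sum_bound d M (s : 'I_d -> nat) :
  5 <= d ->
  (forall i j : 'I_d, i <= j -> s j <= s i) ->
  (forall i j : 'I_d, i != j -> s i + s j <= M /\ 16 * (s i * s j) <= M * M) ->
  4 * (\sum_(i < d) s i) <= d * M /\
  (4 * (\sum_(i < d) s i) = d * M -> forall i, 4 * s i = M).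
Proof.
move=> d5 hmono hpair; have d0 : 0 < d by apply: leq_trans d5.
have d1 : 1 < d by apply: leq_trans d5.
pose i0 := Ordinal d0; pose i1 := Ordinal d1.
have le_i0 i : s i <= s i0 by apply: hmono.
have le_i1 i : i != i0 -> s i <= s i1.
  move=> ni; apply: hmono; rewrite lt0n.
  by apply: contraNneq ni => i_0; exact/eqP/val_inj.
case: (leqP (4 * s i0) M) => [small | large].
  have hle i : 4 * s i <= M ?= iff (4 * s i == M).
    by split=> //; apply: leq_trans small; rewrite leq_mul2l le_i0 orbT.
  have [le eq] := leqif_sum (fun i (_ : true) => hle i).
  rewrite sum_nat_const card_ord -big_distrr /= in le eq.
  by split=> // /eqP; rewrite eq => /forallP h i; apply/eqP/h.
have [pair_add pair_mul] := hpair i0 i1 isT.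
have rest : \sum_(i < d | i != i0) s i <= d.-1 * s i1.
  have -> : d.-1 = #|predC1 i0| by rewrite cardC1 card_ord.
  by rewrite -sum_nat_const; apply: leq_sum.
have lt : 4 * (\sum_(i < d) s i) < d * M.
  rewrite (bigD1 i0) //=.
  apply: leq_ltn_trans (dominant_term_bound d5 large pair_add pair_mul).
  by rewrite leq_mul2l leq_add2l rest orbT.
by split=> [|eq]; [exact: ltnW | rewrite eq ltnn in lt].
Qed.

Theorem corollary3p2 (n d : nat) (F : 'I_d -> {set {set 'I_n}}) :
  5 <= d ->
  pairwise_cross_IU F ->
  (forall i j : 'I_d, i <= j -> #|F j| <= #|F i|) ->
  4 * (\sum_(i < d) #|F i|) <= d * 2 ^ n /\
  ((exists i j : 'I_d, F i != F j) -> 4 * (\sum_(i < d) #|F i|) < d * 2 ^ n).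
Proof.
move=> d5 hF hmono.
have pair_bounds i j : i != j ->
    #|F i| + #|F j| <= 2 ^ n /\ 16 * (#|F i| * #|F j|) <= 2 ^ n * 2 ^ n.
  by move=> ij; split; [apply: cross_IU_card_add | apply: cross_IU_card_mul]; apply: hF.
have [le eq_quarter] := quarter_sum_bound d5 hmono pair_bounds.
split=> // -[i [j Fij]]; rewrite ltn_neqAle le andbT.
apply: contra_neq Fij => /eq_quarter quarter.
exact: pairwise_cross_IU_quarter_eq (leq_trans _ d5) hF quarter i j.
Qed.
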